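(* Consider the closed-loop system described in the context, with the controller given by the Hamiltonian parameterization $a=J_0R+bJb^{T}J_0/2$, $c=J_2\mathbf{I}^{T}b^{T}J_0$ for fixed $b$, and suppose $\mathcal{A}$ is Hurwitz. Then the second Fréchet derivative of $E$ with respect to $R\in\mathbb{S}_n$ is the self-adjoint operator on $\mathbb{S}_n$ $$\partial_R^2E=4\,\mathcal{J}^{\dagger}\big(\mathcal{Q}\mathcal{L}_{\mathcal{A}}\mathcal{S}\mathcal{P}+\mathcal{P}\mathcal{L}_{\mathcal{A}^{T}}\mathcal{S}\mathcal{Q}\big)\mathcal{J},$$ where $\mathcal{J}:\mathbb{S}_n\to\mathbb{R}^{2n\times2n}$, $\mathcal{J}(M):=\begin{bmatrix}0_n\\ J_0\end{bmatrix}M\begin{bmatrix}0_n & I_n\end{bmatrix}$, $\mathcal{J}^{\dagger}$ is its adjoint with respect to the Frobenius inner products, $\mathcal{Q}(X):=QX$ and $\mathcal{P}(X):=XP$ for $X\in\mathbb{R}^{2n\times 2n}$, $\mathcal{S}(X):=(X+X^{T})/2$, and for a Hurwitz matrix $F$, $\mathcal{L}_F(M):=\int_0^{+\infty}e^{Ft}Me^{F^{T}t}\,dt$ (the unique solution $N$ of $FN+NF^{T}+M=0$).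
   Context: Let $n=2\nu$, $m_1=2\mu_1$, $m_2=2\mu_2$, and let $p,p_0$ be positive integers. Plant matrices: $A\in\mathbb{R}^{n\times n}$, $B_1\in\mathbb{R}^{n\times m_1}$, $B_2\in\mathbb{R}^{n\times m_2}$, $C\in\mathbb{R}^{p\times n}$, $D\in\mathbb{R}^{p\times m_1}$, $C_0\in\mathbb{R}^{p_0\times n}$, $D_0\in\mathbb{R}^{p_0\times m_2}$. $J_0,J_1,J_2$ are the canonical real antisymmetric matrices of orders $n,m_1,m_2$ (block diagonal with copies of $\begin{bmatrix}0&1\\-1&0\end{bmatrix}$). $J:=\begin{bmatrix}J_2&0\\0&DJ_1D^{T}\end{bmatrix}$, $\mathbf{I}:=\begin{bmatrix}I_{m_2}\\0\end{bmatrix}\in\mathbb{R}^{(m_2+p)\times m_2}$, $\mathbb{S}_n$ is the space of real symmetric $n\times n$ matrices. $b\in\mathbb{R}^{n\times(m_2+p)}$, $B:=[\,B_1\ \ B_2\,]$, $\mathbf{C}:=\begin{bmatrix}0\\ C\end{bmatrix}$, $\mathbf{D}:=\begin{bmatrix}0 & I_{m_2}\\ D & 0\end{bmatrix}$. Closed-loop matrices: $\mathcal{A}:=\begin{bmatrix}A & B_2c\\ b\mathbf{C} & a\end{bmatrix}$, $\mathcal{B}:=\begin{bmatrix}B\\ b\mathbf{D}\end{bmatrix}$, $\mathcal{C}:=\begin{bmatrix}C_0 & D_0c\end{bmatrix}$. When $\mathcal{A}$ is Hurwitz, $P,Q$ are the unique solutions of $\mathcal{A}P+P\mathcal{A}^{T}+\mathcal{B}\mathcal{B}^{T}=0$,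 $\mathcal{A}^{T}Q+Q\mathcal{A}+\mathcal{C}^{T}\mathcal{C}=0$, and $E:=\mathrm{Tr}(\mathcal{C}P\mathcal{C}^{T})$. *)

From HB Require Import structures.
From mathcomp Require Import all_boot all_order all_algebra.
From mathcomp Require Import all_classical all_reals all_analysis.
From mathcomp Require Import complex.
Import numFieldNormedType.Exports.
Set Implicit Arguments.
Unset Strict Implicit.
Unset Printing Implicit Defensive.
Import Order.TTheory GRing.Theory Num.Theory.
Local Open Scope ring_scope.

Section Defs.
Variable R : realType.

(* canonical real antisymmetric matrix of order k.*2: block diagonal with
   copies of [[0,1],[-1,0]] *)
Definition Jcan (k : nat) : 'M[R]_(k.*2) :=
  \matrix_(i, j) (if ~~ odd i && (val j == (val i).+1) then 1
                  else if odd i && (val i == (val j).+1) then -1 else 0).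

Definition hurwitz (k : nat) (F : 'M[R]_k) : Prop :=
  forall z : R[i], root (map_poly (fun x : R => (x%:C)%C) (char_poly F)) z ->
    complex.Re z < 0.

Definition lyap (k : nat) (F M : 'M[R]_k) : 'M[R]_k :=
  xget 0 [set N : 'M[R]_k | F *m N + N *m F^T + M = 0].

Definition frob (k l : nat) (X Y : 'M[R]_(k, l)) : R := \tr (X^T *m Y).

Definition symmetricb (k : nat) (M : 'M[R]_k) : Prop := M^T = M.

Definition symp (k : nat) (X : 'M[R]_k) : 'M[R]_k := 2^-1 *: (X + X^T).

Variables (nu mu1 mu2 p p0 : nat).
Local Notation n := (nu.*2).
Local Notation m1 := (mu1.*2).
Local Notation m2 := (mu2.*2).
Variables (A : 'M[R]_n) (B1 : 'M[R]_(n, m1)) (B2 : 'M[R]_(n, m2))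
  (C : 'M[R]_(p, n)) (D : 'M[R]_(p, m1)) (C0 : 'M[R]_(p0, n))
  (D0 : 'M[R]_(p0, m2)) (b : 'M[R]_(n, m2 + p)).

Definition Jbig : 'M[R]_(m2 + p) :=
  block_mx (Jcan mu2) 0 0 (D *m Jcan mu1 *m D^T).
Definition Ibold : 'M[R]_(m2 + p, m2) := col_mx 1%:M 0.
Definition Bcat : 'M[R]_(n, m1 + m2) := row_mx B1 B2.
Definition Cbold : 'M[R]_(m2 + p, n) := col_mx 0 C.
Definition Dbold : 'M[R]_(m2 + p, m1 + m2) :=
  block_mx 0 1%:M D 0.

Definition ctrl_a (Rm : 'M[R]_n) : 'M[R]_n :=
  Jcan nu *m Rm + 2^-1 *: (b *m Jbig *m b^T *m Jcan nu).
Definition ctrl_c : 'M[R]_(m2, n) :=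
  Jcan mu2 *m Ibold^T *m b^T *m Jcan nu.

Definition Acl (Rm : 'M[R]_n) : 'M[R]_(n + n) :=
  block_mx A (B2 *m ctrl_c) (b *m Cbold) (ctrl_a Rm).
Definition Bcl : 'M[R]_(n + n, m1 + m2) := col_mx Bcat (b *m Dbold).
Definition Ccl : 'M[R]_(p0, n + n) := row_mx C0 (D0 *m ctrl_c).

Definition Pgram (Rm : 'M[R]_n) : 'M[R]_(n + n) := lyap (Acl Rm) (Bcl *m Bcl^T).
Definition Qgram (Rm : 'M[R]_n) : 'M[R]_(n + n) := lyap (Acl Rm)^T (Ccl^T *m Ccl).

Definition Ecost (Rm : 'M[R]_n) : R := \tr (Ccl *m Pgram Rm *m Ccl^T).

Definition Jop (M : 'M[R]_n) : 'M[R]_(n + n) :=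
  col_mx (0 : 'M[R]_n) (Jcan nu) *m M *m row_mx (0 : 'M[R]_n) 1%:M.

(* adjoint of Jop : S_n -> R^{2n x 2n} w.r.t. Frobenius inner products:
   the orthogonal projection onto S_n of [0; J0]^T Y [0 I]^T *)
Definition Jadj (Y : 'M[R]_(n + n)) : 'M[R]_n :=
  symp ((col_mx (0 : 'M[R]_n) (Jcan nu))^T *m Y *m (row_mx (0 : 'M[R]_n) 1%:M)^T).

Definition Hess (Rm : 'M[R]_n) (M : 'M[R]_n) : 'M[R]_n :=
  let X := Jop M in
  4%:R *: Jadj (Qgram Rm *m lyap (Acl Rm) (symp (X *m Pgram Rm))
                + lyap (Acl Rm)^T (symp (Qgram Rm *m X)) *m Pgram Rm).

End Defs.

(* E(R) = tr(C L_{A(R)}(B B^T) C^T), where the closed-loop matrix A(R) = A(0) + J(R)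
   is affine in R. Differentiating the Lyapunov equation A P + P A^T + B B^T = 0
   gives P' = L_A(J(H) P + P J(H)^T), and differentiating once more expresses the
   second derivative as tr(C L_A(Z) C^T) for an explicit Z. The duality
   tr(L_{A^T}(M) N) = tr(M L_A(N)) turns this into tr(Q Z), and the symmetry of
   P, Q and of every L_A(S(.)) collapses the four terms of Z into
   4 <Q L_A S(J(H) P) + L_{A^T} S(Q J(H)) P, J(K)>, that is 4 <J^†(...), K>.
   Stability of A is used only to make L_A well defined and smooth: F N + N F^T = 0
   is a homogeneous Sylvester equation between F and -F^T, whose spectra lie in
   opposite half planes, so N = 0; the vectorised Lyapunov operator is then
   invertible, which persists near R and makes L_{A(R)} differentiable in R. *)

From HB Require Import structures.
From mathcomp Require Import all_boot all_order all_algebra.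
From mathcomp Require Import all_classical all_reals all_analysis.
From mathcomp Require Import complex perm.
Import numFieldNormedType.Exports.
Import Order.TTheory GRing.Theory Num.Theory.
Local Open Scope ring_scope.
Set Implicit Arguments.
Unset Strict Implicit.
Unset Printing Implicit Defensive.

Section Sylvester.
Variable K : closedFieldType.

Lemma horner_mx_intertwine k (F G N : 'M[K]_k.+1) (q : {poly K}) :
  F *m N = N *m G -> horner_mx F q *m N = N *m horner_mx G q.
Proof.
move=> FNG; elim/poly_ind: q => [|q c IH]; first by rewrite !rmorph0 mul0mx mulmx0.
rewrite !rmorphD !rmorphM /= !horner_mx_X !horner_mx_C -!mulmxE.
rewrite mulmxDl mulmxDr -mulmxA FNG mulmxA IH -mulmxA.
by rewrite mul_scalar_mx mul_mx_scalar.
Qed.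

Lemma horner_mx_char_poly_unit k (F G : 'M[K]_k.+1) :
  (forall z, root (char_poly F) z -> G - z%:M \in unitmx) ->
  horner_mx G (char_poly F) \in unitmx.
Proof.
move=> hG; have [r defF] := closed_field_poly_normal (char_poly F).
have /monicP lcF := char_poly_monic F; rewrite lcF scale1r in defF.
have {}hG z : z \in r -> G - z%:M \in unitmx.
  by move=> zr; apply: hG; rewrite defF root_prod_XsubC.
rewrite defF rmorph_prod /=; elim: r hG {defF} => [|z r IH] hG.
  by rewrite big_nil unitmx1.
rewrite big_cons -mulmxE unitmx_mul IH => [|w wr]; last by apply: hG; rewrite inE wr orbT.
by rewrite rmorphB /= horner_mx_X horner_mx_C hG ?mem_head.
Qed.

Lemma sylvester_homog_eq0 k (F G N : 'M[K]_k) :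
  F *m N = N *m G -> (forall z, root (char_poly F) z -> G - z%:M \in unitmx) ->
  N = 0.
Proof.
case: k F G N => [|k] F G N FNG hG; first by apply/matrixP => -[].
have U := horner_mx_char_poly_unit hG.
have : N *m horner_mx G (char_poly F) = 0.
  by rewrite -(horner_mx_intertwine _ FNG) Cayley_Hamilton mul0mx.
by move/(congr1 (mulmx^~ (invmx (horner_mx G (char_poly F))))); rewrite mulmxK // mul0mx.
Qed.

Lemma singular_oppTr_root k (F : 'M[K]_k) (z : K) :
  ~~ ((- F^T - z%:M) \in unitmx) -> root (char_poly F) (- z).
Proof.
rewrite unitmxE unitfE negbK -det_tr => /det0P [v vn0 hv].
rewrite -eigenvalue_root_char; apply/eigenvalueP; exists v => //.
move/eqP: hv; rewrite raddfB /= raddfN /= trmxK tr_scalar_mx mulmxBr mulmxN subr_eq0.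
by rewrite mul_mx_scalar eqr_oppLR => /eqP ->; rewrite scaleNr.
Qed.

End Sylvester.

Section Lyapunov.
Variable R : realType.

Lemma hurwitz_tr k (F : 'M[R]_k) : hurwitz F -> hurwitz F^T.
Proof.
have charFT : char_poly F^T = char_poly F.
  rewrite /char_poly -det_tr; congr (\det _).
  by rewrite /char_poly_mx raddfB /= tr_scalar_mx map_trmx trmxK.
by rewrite /hurwitz charFT.
Qed.

(* Over R[i], F N = N (- F^T) is a homogeneous Sylvester equation, and the
   spectra of F and - F^T are disjoint since they lie in opposite half planes. *)
Lemma hurwitz_lyap_eq0 k (F N : 'M[R]_k) :
  hurwitz F -> F *m N + N *m F^T = 0 -> N = 0.
Proof.
move=> hF FN0; pose c := real_complex R.
pose Fc := map_mx c F; have charFc : map_poly c (char_poly F) = char_poly Fc.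
  exact: map_char_poly.
apply/eqP; rewrite -(map_mx_eq0 c); apply/eqP.
apply: (@sylvester_homog_eq0 _ _ Fc (- Fc^T)).
  move: FN0 => /(congr1 (map_mx c)); rewrite map_mx0 map_mxD !map_mxM -map_trmx.
  by move/eqP; rewrite addr_eq0 mulmxN => /eqP.
move=> z root_z; apply: contraT => /singular_oppTr_root root_Nz.
have := hF z; have := hF (- z); rewrite charFc => /(_ root_Nz) + /(_ root_z).
by case: z {root_z root_Nz} => x y /=; rewrite oppr_lt0 => /lt_trans/[apply]; rewrite ltxx.
Qed.

Definition lyap_op k (F N : 'M[R]_k) : 'M[R]_k := F *m N + N *m F^T.

Lemma lyap_op_is_linear k (F : 'M[R]_k) : linear (lyap_op F).
Proof.
move=> a N1 N2; rewrite /lyap_op mulmxDr mulmxDl -scalemxAr -scalemxAl.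
by rewrite scalerDr addrACA.
Qed.
HB.instance Definition _ k (F : 'M[R]_k) :=
  GRing.isLinear.Build R 'M[R]_k 'M[R]_k _ (lyap_op F) (lyap_op_is_linear F).

Definition lyap_mx k (F : 'M[R]_k) : 'M[R]_(k * k) := lin_mx (lyap_op F).

(* Unlike [lyap], this formula visibly depends smoothly on [F]; the two agree
   whenever [lyap_mx F] is invertible (lyapE). *)
Definition lyap_sol k (F M : 'M[R]_k) : 'M[R]_k :=
  vec_mx (- mxvec M *m invmx (lyap_mx F)).

Lemma mul_vec_lyap_mx k (F N : 'M[R]_k) :
  mxvec N *m lyap_mx F = mxvec (lyap_op F N).
Proof. exact: mul_vec_lin. Qed.

Lemma hurwitz_lyap_mx_unit k (F : 'M[R]_k) : hurwitz F -> lyap_mx F \in unitmx.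
Proof.
move=> hF; rewrite unitmxE unitfE; apply/negP => /det0P [v vn0 hv].
have : lyap_op F (vec_mx v) = 0 by rewrite -mx_rV_lin hv linear0.
move=> /(hurwitz_lyap_eq0 hF) /(congr1 mxvec); rewrite vec_mxK linear0 => v0.
by move: vn0; rewrite v0 eqxx.
Qed.

Section Invertible.
Variables (k : nat) (F : 'M[R]_k).
Hypothesis unitF : lyap_mx F \in unitmx.

Lemma lyap_uniq M N : lyap_op F N + M = 0 -> N = lyap_sol F M.
Proof.
move=> /eqP; rewrite addr_eq0 => /eqP FN.
have : mxvec N *m lyap_mx F = - mxvec M by rewrite mul_vec_lyap_mx FN linearN.
by move/(canRL (mulmxK unitF)) => vecN; rewrite /lyap_sol -vecN mxvecK.
Qed.

Lemma lyap_solP M : lyap_op F (lyap_sol F M) + M = 0.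
Proof.
apply: (can_inj mxvecK); rewrite linearD /= -mul_vec_lyap_mx /lyap_sol vec_mxK.
by rewrite mulmxKV // linear0 addNr.
Qed.

Lemma lyapE M : lyap F M = lyap_sol F M.
Proof.
by apply: xget_unique => [|N /= FN]; [exact: lyap_solP | exact: lyap_uniq].
Qed.

Lemma lyapP M : lyap_op F (lyap F M) + M = 0.
Proof. by rewrite lyapE; exact: lyap_solP. Qed.

Lemma lyap_eq M N : lyap_op F N + M = 0 -> N = lyap F M.
Proof. by rewrite lyapE; exact: lyap_uniq. Qed.

Lemma lyap_tr M : (lyap F M)^T = lyap F M^T.
Proof.
apply: lyap_eq; move/(congr1 trmx): (lyapP M); rewrite linear0 => <-.
by rewrite /lyap_op !linearD /= !trmx_mul trmxK [_ *m _ + _]addrC.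
Qed.

Lemma lyapZ a M : lyap F (a *: M) = a *: lyap F M.
Proof. by symmetry; apply: lyap_eq; rewrite linearZ /= -scalerDr lyapP scaler0. Qed.

End Invertible.
End Lyapunov.

Section TraceAlgebra.
Variable R : realType.

Lemma lyap_dual k (F M N : 'M[R]_k) :
  lyap_mx F \in unitmx -> lyap_mx F^T \in unitmx ->
  \tr (lyap F^T M *m N) = \tr (M *m lyap F N).
Proof.
move=> unitF unitFT; set U := lyap F^T M; set W := lyap F N.
have /eqP := lyapP unitFT M; rewrite /lyap_op trmxK addrC addr_eq0 => /eqP eM.
have /eqP := lyapP unitF N; rewrite /lyap_op addrC addr_eq0 => /eqP eN.
rewrite -/U -/W in eM eN; rewrite eM eN mulmxN mulNmx !mulmxDr !mulmxDl !raddfN !raddfD /=.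
by rewrite !mulmxA [\tr (U *m W *m F^T)]mxtrace_mulC mulmxA [LHS]addrC.
Qed.

Lemma symp_tr k (Z : 'M[R]_k) : (symp Z)^T = symp Z.
Proof. by rewrite /symp linearZ /= linearD /= trmxK addrC. Qed.

Lemma tr_sympl k (Z N : 'M[R]_k) : N^T = N -> \tr (symp Z *m N) = \tr (Z *m N).
Proof.
move=> symN; rewrite /symp -scalemxAl mxtraceZ mulmxDl raddfD /=.
rewrite -[\tr (Z^T *m N)]mxtrace_tr trmx_mul trmxK symN mxtrace_mulC.
by rewrite -mulr2n -[\tr (N *m Z) *+ 2]mulr_natl mulKf ?pnatr_eq0.
Qed.

Lemma tr_sympr k (N Z : 'M[R]_k) : N^T = N -> \tr (N *m symp Z) = \tr (N *m Z).
Proof. by move=> symN; rewrite mxtrace_mulC tr_sympl // mxtrace_mulC. Qed.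

End TraceAlgebra.

Section HessianTrace.
Variables (R : realType) (k q : nat) (A BB : 'M[R]_k) (Cc : 'M[R]_(q, k)).
Hypotheses (unitA : lyap_mx A \in unitmx) (unitAT : lyap_mx A^T \in unitmx).
Hypothesis symBB : BB^T = BB.

Local Notation P := (lyap A BB).
Local Notation Q := (lyap A^T (Cc^T *m Cc)).
Local Notation dP Z := (lyap A (Z *m P + P *m Z^T)).

Lemma hessian_trace H K :
  \tr (Cc *m lyap A (K *m dP H + dP H *m K^T + (H *m dP K + dP K *m H^T)) *m Cc^T)
  = 4%:R * \tr ((Q *m lyap A (symp (H *m P)) + lyap A^T (symp (Q *m H)) *m P)^T *m K).
(* By [lyap_dual] the left side is [\tr (Q Z)]; since [Q] and both [dP] are
   symmetric, each of the two halves of [Z] contributes twice. *)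
Proof.
have symP : P^T = P by rewrite lyap_tr // symBB.
have symQ : Q^T = Q by rewrite lyap_tr // trmx_mul trmxK.
have dPE Z : dP Z = 2%:R *: lyap A (symp (Z *m P)).
  by rewrite lyapZ // scalerA mulfV ?pnatr_eq0 // scale1r trmx_mul symP.
have tr_symT (S1 S2 Z : 'M[R]_k) : S1^T = S1 -> S2^T = S2 ->
    \tr (S1 *m (S2 *m Z^T)) = \tr (S1 *m (Z *m S2)).
  move=> symS1 symS2; rewrite -mxtrace_tr !trmx_mul trmxK symS1 symS2.
  by rewrite mxtrace_mulC mulmxA.
set N1 := lyap A (symp (H *m P)); set N2 := lyap A (symp (K *m P)).
set U := lyap A^T (symp (Q *m H)).
have symN1 : N1^T = N1 by rewrite lyap_tr // symp_tr.
have symN2 : N2^T = N2 by rewrite lyap_tr // symp_tr.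
have symU : U^T = U by rewrite lyap_tr // symp_tr.
have symdP Z : (dP Z)^T = dP Z by rewrite dPE linearZ /= lyap_tr // symp_tr.
rewrite mxtrace_mulC mulmxA -lyap_dual // !mulmxDr !raddfD /= !tr_symT //.
rewrite !trmx_mul symQ symU symP mulmxDl raddfD /=.
have trN1 : \tr (N1^T *m Q *m K) = \tr (Q *m (K *m N1)).
  by rewrite symN1 -mulmxA mxtrace_mulC -mulmxA.
have trU : \tr (P *m U *m K) = \tr (Q *m (H *m N2)).
  rewrite -mulmxA mxtrace_mulC -mulmxA -(tr_sympr (K *m P) symU).
  by rewrite [LHS]lyap_dual // tr_sympl // -mulmxA.
rewrite trN1 trU !dPE -!scalemxAr !mxtraceZ mulrDr.
by congr (_ + _); rewrite -mulrDl -natrD.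
Qed.

End HessianTrace.

Section Differential.
Variables (R : realType) (V W : normedModType R).

Lemma is_diff_near (f g df : V -> W) x :
  (\forall y \near x, f y = g y) -> is_diff x g df -> is_diff x f df.
Proof.
move=> fg dg; have fx : f x = g x := nbhs_singleton fg.
have dfE : f \o shift x = cst (f x) + 'd g x +o_ 0 id.
  have dgx : differentiable g x := ex_diff (is_diff_def := dg).
  have /eqaddoP dgE := diff_locally dgx.
  apply/eqaddoP => e e0; rewrite (near_shift 0 x) in fg.
  by apply: filterS2 fg (dgE e e0) => h /=; rewrite subr0 !fctE /= fx => ->.
have dfg : 'd f x = 'd g x :> (V -> W) by apply: diff_unique => //; exact: diff_continuous.
have df_x : differentiable f x.
  by apply/diff_locallyP; rewrite dfg; split => //; exact: diff_continuous.
by apply: DiffDef; [exact: df_x | exact: etrans dfg diff_val].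
Qed.

Lemma is_diff_unique (f df1 df2 : V -> W) x :
  is_diff x f df1 -> is_diff x f df2 -> df1 = df2.
Proof.
by move=> d1 d2; rewrite -(diff_val (is_diff_def := d1)) (diff_val (is_diff_def := d2)).
Qed.

Lemma is_diff_const (a : W) x :
  is_diff x (fun _ : V => a) (fun _ => 0).
Proof. exact: is_diff_cst. Qed.

Lemma is_diff_sum (I : Type) (r : seq I) (F dF : I -> V -> W) x :
  (forall i, is_diff x (F i) (dF i)) ->
  is_diff x (fun y => \sum_(i <- r) F i y) (fun v => \sum_(i <- r) dF i v).
Proof.
move=> dFx; elim: r => [|i r IH].
  under eq_fun do rewrite big_nil; under [X in is_diff _ _ X]eq_fun do rewrite big_nil.
  exact: is_diff_cst.
under eq_fun do rewrite big_cons; under [X in is_diff _ _ X]eq_fun do rewrite big_cons.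
exact: is_diffD.
Qed.

Lemma is_diffZl (k dk : V -> R) (w : W) x :
  is_diff x k dk -> is_diff x (fun y => k y *: w) (fun v => dk v *: w).
Proof. by move=> dkx; exact: (is_diff_comp dkx (is_diff_scalel (k x) w)). Qed.

Lemma differentiable_near (f g : V -> W) x :
  (\forall y \near x, f y = g y) -> differentiable g x -> differentiable f x.
Proof.
by move=> fg /differentiableP dg; exact: (ex_diff (is_diff_def := is_diff_near fg dg)).
Qed.

Lemma differentiable_prod (I : Type) (r : seq I) (F : I -> V -> R) x :
  (forall i, differentiable (F i) x) -> differentiable (fun y => \prod_(i <- r) F i y) x.
Proof.
move=> dFx; elim: r => [|i r IH].
  by under eq_fun do rewrite big_nil; exact: differentiable_cst.
by under eq_fun do rewrite big_cons; exact: differentiableM.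
Qed.

End Differential.

Section MatrixDifferential.
Variables (R : realType) (V : normedModType R).

Definition mxentry a b (i : 'I_a) (j : 'I_b) (M : 'M[R]_(a, b)) : R := M i j.

Lemma mxentry_is_linear a b i j : linear (@mxentry a b i j).
Proof. by move=> c M N; rewrite /mxentry !mxE. Qed.
HB.instance Definition _ a b i j := GRing.isLinear.Build R 'M[R]_(a, b) R _
  (@mxentry a b i j) (@mxentry_is_linear a b i j).

Lemma is_diff_entry a b (f df : V -> 'M[R]_(a, b)) x i j :
  is_diff x f df -> is_diff x (fun y => f y i j) (fun v => df v i j).
Proof.
move=> dfx; have entry_cont : continuous (@mxentry a b i j) := @coord_continuous R a b i j.
have dentry : is_diff (f x) (@mxentry a b i j) (@mxentry a b i j).
  by apply: DiffDef; [exact: linear_differentiable | exact: diff_lin].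
exact: (is_diff_comp dfx dentry).
Qed.

Lemma is_diff_linear a b c d (L : {linear 'M[R]_(a, b) -> 'M[R]_(c, d)})
    (f df : V -> 'M[R]_(a, b)) x :
  is_diff x f df -> is_diff x (fun y => L (f y)) (fun v => L (df v)).
Proof.
have LE (M : 'M[R]_(a, b)) : L M = \sum_i \sum_j M i j *: L (delta_mx i j).
  rewrite {1}[M]matrix_sum_delta linear_sum; apply: eq_bigr => i _.
  by rewrite linear_sum; apply: eq_bigr => j _; rewrite linearZ.
move=> dfx; under eq_fun do rewrite LE; under [X in is_diff _ _ X]eq_fun do rewrite LE.
do 2![apply: is_diff_sum => ?]; exact/is_diffZl/is_diff_entry.
Qed.

Lemma is_diff_mx a b (f df : V -> 'M[R]_(a, b)) x :
  (forall i j, is_diff x (fun y => f y i j) (fun v => df v i j)) -> is_diff x f df.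
Proof.
move=> dfx; rewrite (_ : f = fun y => \sum_i \sum_j f y i j *: delta_mx i j); last first.
  by apply/funext => y; rewrite [LHS]matrix_sum_delta.
rewrite (_ : df = fun v => \sum_i \sum_j df v i j *: delta_mx i j); last first.
  by apply/funext => v; rewrite [LHS]matrix_sum_delta.
do 2![apply: is_diff_sum => ?]; exact: is_diffZl.
Qed.

Lemma is_diff_mulmx a b c (f df : V -> 'M[R]_(a, b)) (g dg : V -> 'M[R]_(b, c)) x :
  is_diff x f df -> is_diff x g dg ->
  is_diff x (fun y => f y *m g y) (fun v => df v *m g x + f x *m dg v).
Proof.
move=> dfx dgx; apply: is_diff_mx => i j.
under eq_fun do rewrite mxE; under [X in is_diff _ _ X]eq_fun do rewrite !mxE -big_split.
apply: is_diff_sum => l; apply: is_diff_eq; first exact: is_diffM (is_diff_entry i l dfx)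
  (is_diff_entry l j dgx).
by apply/funext => v; rewrite !fctE /= addrC; congr (_ + _); exact: mulrC.
Qed.

Lemma is_diff_trace a (f df : V -> 'M[R]_a) x :
  is_diff x f df -> is_diff x (fun y => \tr (f y)) (fun v => \tr (df v)).
Proof. by move=> dfx; apply: is_diff_sum => i; exact: is_diff_entry. Qed.

Lemma is_diff_trmx a b (f df : V -> 'M[R]_(a, b)) x :
  is_diff x f df -> is_diff x (fun y => (f y)^T) (fun v => (df v)^T).
Proof. exact: (is_diff_linear (trmx : {linear 'M[R]_(a, b) -> 'M[R]_(b, a)})). Qed.

Lemma differentiable_entry a b (f : V -> 'M[R]_(a, b)) x i j :
  differentiable f x -> differentiable (fun y => f y i j) x.
Proof.
by move=> /differentiableP dfx; exact: (ex_diff (is_diff_def := is_diff_entry i j dfx)).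
Qed.

Lemma differentiable_mx a b (f : V -> 'M[R]_(a, b)) x :
  (forall i j, differentiable (fun y => f y i j) x) -> differentiable f x.
Proof.
move=> dfx; suff : is_diff x f (fun v => \matrix_(i, j) 'd (fun y => f y i j) x v).
  by move=> ?; exact: ex_diff.
apply: is_diff_mx => i j; under [X in is_diff _ _ X]eq_fun do rewrite mxE.
exact: differentiableP.
Qed.

Lemma differentiable_det n (g : V -> 'M[R]_n) x :
  differentiable g x -> differentiable (fun y => \det (g y)) x.
Proof.
move=> dg; rewrite /determinant.
have dterm (s : 'S_n) : differentiable (fun y => (-1) ^+ s * \prod_i g y i (s i)) x.
  apply: differentiableM; first exact: differentiable_cst.
  by apply: differentiable_prod => i; exact: differentiable_entry.
exact: (ex_diff (is_diff_def := is_diff_sum _ (fun s => differentiableP (dterm s)))).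
Qed.

Lemma unitmx_near n (g : V -> 'M[R]_n) x :
  differentiable g x -> g x \in unitmx -> \forall y \near x, g y \in unitmx.
Proof.
move=> dg; rewrite unitmxE unitfE => det_gx.
have det_near := cvgr_neq0 _ (differentiable_continuous (differentiable_det dg)) det_gx.
near=> y; rewrite unitmxE unitfE; near: y; exact: det_near.
Unshelve. all: by end_near. Qed.

Lemma differentiable_invmx n (g : V -> 'M[R]_n) x :
  differentiable g x -> g x \in unitmx -> differentiable (fun y => invmx (g y)) x.
Proof.
move=> dg unit_gx.
apply: differentiable_mx => i j.
apply: (differentiable_near (g := fun y => (\det (g y))^-1 * \adj (g y) i j)).
  by apply: filterS (unitmx_near dg unit_gx) => y unit_gy; rewrite /invmx unit_gy mxE.
under eq_fun do rewrite !mxE; apply: differentiableM.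
  by apply: differentiableV; [exact: differentiable_det | rewrite -unitfE].
apply: differentiableM; first exact: differentiable_cst.
apply/differentiable_det/differentiable_mx => a b.
by under eq_fun do rewrite !mxE; exact: differentiable_entry.
Qed.

End MatrixDifferential.

Section LyapunovDifferential.
Variables (R : realType) (V : normedModType R).

Lemma differentiable_lyap_mx k (F : V -> 'M[R]_k) x :
  differentiable F x -> differentiable (fun y => lyap_mx (F y)) x.
Proof.
move=> /differentiableP dF; apply: differentiable_mx => i j.
pose E : 'M[R]_k := vec_mx (delta_mx 0 i).
have dop := is_diff_linear (mxvec : {linear 'M[R]_k -> 'rV[R]_(k * k)})
  (is_diffD (is_diff_mulmx dF (is_diff_cst E x))
            (is_diff_mulmx (is_diff_cst E x) (is_diff_trmx dF))).
under eq_fun do rewrite /lyap_mx /lin_mx /lin1_mx mxE.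
exact: (differentiable_entry 0 j (ex_diff (is_diff_def := dop))).
Qed.

Lemma is_diff_lyap k (F dF M dM : V -> 'M[R]_k) x :
  is_diff x F dF -> is_diff x M dM -> lyap_mx (F x) \in unitmx ->
  let L := lyap (F x) (M x) in
  is_diff x (fun y => lyap (F y) (M y))
    (fun v => lyap (F x) (dF v *m L + L *m (dF v)^T + dM v)).
Proof.
move=> dFx dMx unitFx L.
have unit_near := unitmx_near (differentiable_lyap_mx (ex_diff (is_diff_def := dFx))) unitFx.
pose Y y := lyap (F y) (M y).
have /differentiableP dYx : differentiable Y x.
  apply: (differentiable_near (g := fun y => lyap_sol (F y) (M y))).
    by near=> y; apply: lyapE; near: y.
  have dinv := differentiableP (differentiable_invmx
    (differentiable_lyap_mx (ex_diff (is_diff_def := dFx))) unitFx).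
  have dvec := is_diffN (is_diff_linear (mxvec : {linear 'M[R]_k -> 'rV[R]_(k * k)}) dMx).
  exact: (ex_diff (is_diff_def := is_diff_linear
    (vec_mx : {linear 'rV[R]_(k * k) -> 'M[R]_k}) (is_diff_mulmx dvec dinv))).
have dPhi := is_diffD (is_diffD (is_diff_mulmx dFx dYx)
  (is_diff_mulmx dYx (is_diff_trmx dFx))) dMx.
have dPhi0 : is_diff x (fun y => F y *m Y y + Y y *m (F y)^T + M y) (cst 0).
  apply: is_diff_near (is_diff_cst 0 x).
  by near=> y; apply: lyapP; near: y.
have dPhi_v v := congr1 (fun h => h v) (is_diff_unique dPhi dPhi0).
apply: (is_diff_eq dYx); apply/funext => v; apply: lyap_eq => //.
move: (dPhi_v v); rewrite !fctE /= => <-.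
by rewrite /lyap_op -!addrA [RHS]addrCA [in RHS](addrCA (dF v *m Y x)).
Unshelve. all: by end_near.
Qed.

End LyapunovDifferential.

Lemma frob_Jadj (R : realType) (nu : nat) (Z : 'M[R]_(nu.*2 + nu.*2)) (K : 'M[R]_(nu.*2)) :
  K^T = K -> frob (Jadj Z) K = frob Z (Jop K).
Proof.
move=> symK; rewrite /frob /Jadj /Jop symp_tr tr_sympl //.
rewrite -[RHS]mxtrace_tr !trmx_mul !trmxK symK.
set c := (col_mx _ _)^T; set r := (row_mx _ _)^T.
by rewrite (mulmxA r) -(mulmxA (r *m K)) [RHS]mxtrace_mulC !mulmxA.
Qed.

Section ClosedLoop.
Variables (R : realType) (nu mu1 mu2 p p0 : nat).
Variables (A : 'M[R]_(nu.*2)) (B1 : 'M[R]_(nu.*2, mu1.*2)) (B2 : 'M[R]_(nu.*2, mu2.*2))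
  (C : 'M[R]_(p, nu.*2)) (D : 'M[R]_(p, mu1.*2)) (C0 : 'M[R]_(p0, nu.*2))
  (D0 : 'M[R]_(p0, mu2.*2)) (b : 'M[R]_(nu.*2, mu2.*2 + p)).

Local Notation Acl_ X := (Acl A B2 C D b X).
Local Notation BB := (Bcl B1 B2 D b *m (Bcl B1 B2 D b)^T).
Local Notation Cc := (Ccl C0 D0 b).
Local Notation E := (fun X => Ecost A B1 B2 C D C0 D0 b X : R^o).
Local Notation P X := (lyap (Acl_ X) BB).
Local Notation dP X H := (lyap (Acl_ X) (Jop H *m P X + P X *m (Jop H)^T)).

Lemma Acl_affine X : Acl_ X = Acl_ 0 + Jop X.
Proof.
rewrite /Acl /Jop mul_col_mx mul_col_row !mul0mx !mulmx0 mulmx1 add_block_mx !addr0.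
by rewrite /ctrl_a mulmx0 add0r [_ + Jcan R nu *m X]addrC.
Qed.

Lemma is_diff_Jop X : is_diff X (@Jop R nu) (@Jop R nu).
Proof.
apply: is_diff_eq; first exact: is_diff_mulmx (is_diff_mulmx (is_diff_const _ X)
  (is_diff_id X)) (is_diff_const _ X).
by apply/funext => H; rewrite /= mul0mx add0r mulmx0 addr0.
Qed.

Lemma is_diff_Acl X : is_diff X (fun Y => Acl_ Y) (@Jop R nu).
Proof.
rewrite (_ : (fun Y => Acl_ Y) = cst (Acl_ 0) + @Jop R nu); last first.
  by apply/funext => Y; rewrite Acl_affine.
apply: is_diff_eq (is_diffD (is_diff_const (Acl_ 0) X) (is_diff_Jop X)) _.
by apply/funext => H; rewrite !fctE add0r.
Qed.

Lemma unit_lyap_Acl_near X : lyap_mx (Acl_ X) \in unitmx ->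
  \forall Y \near X, lyap_mx (Acl_ Y) \in unitmx.
Proof.
exact: (unitmx_near (differentiable_lyap_mx (ex_diff (is_diff_def := is_diff_Acl X)))).
Qed.

Lemma is_diff_Ecost X : lyap_mx (Acl_ X) \in unitmx ->
  is_diff X E (fun H => \tr (Cc *m dP X H *m Cc^T)).
Proof.
move=> unitX; have dPX := is_diff_lyap (is_diff_Acl X) (is_diff_const BB X) unitX.
apply: is_diff_eq (is_diff_trace (is_diff_mulmx (is_diff_mulmx (is_diff_const Cc X) dPX)
  (is_diff_const Cc^T X))) _.
by apply/funext => H; rewrite /= mul0mx add0r mulmx0 !addr0.
Qed.

Lemma is_diff_dEcost X H : lyap_mx (Acl_ X) \in unitmx ->
  is_diff X (fun Y => 'd E Y H) (fun K => \tr (Cc *m lyap (Acl_ X)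
    (Jop K *m dP X H + dP X H *m (Jop K)^T + (Jop H *m dP X K + dP X K *m (Jop H)^T))
    *m Cc^T)).
Proof.
move=> unitX.
apply: (is_diff_near (g := fun Y => \tr (Cc *m dP Y H *m Cc^T))).
  near=> Y; have unitY : lyap_mx (Acl_ Y) \in unitmx by near: Y; exact: unit_lyap_Acl_near.
  by rewrite (diff_val (is_diff_def := is_diff_Ecost unitY)).
have dPX := is_diff_lyap (is_diff_Acl X) (is_diff_const BB X) unitX.
have dM := is_diffD (is_diff_mulmx (is_diff_const (Jop H) X) dPX)
  (is_diff_mulmx dPX (is_diff_const (Jop H)^T X)).
have dW := is_diff_lyap (is_diff_Acl X) dM unitX.
apply: is_diff_eq (is_diff_trace (is_diff_mulmx (is_diff_mulmx (is_diff_const Cc X) dW)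
  (is_diff_const Cc^T X))) _.
by apply/funext => K; rewrite /= !fctE !mul0mx !add0r !mulmx0 !addr0.
Unshelve. all: by end_near.
Qed.

End ClosedLoop.

Theorem lemma5 (R : realType) (nu mu1 mu2 p p0 : nat)
  (hp : (0 < p)%N) (hp0 : (0 < p0)%N)
  (A : 'M[R]_(nu.*2)) (B1 : 'M[R]_(nu.*2, mu1.*2)) (B2 : 'M[R]_(nu.*2, mu2.*2))
  (C : 'M[R]_(p, nu.*2)) (D : 'M[R]_(p, mu1.*2)) (C0 : 'M[R]_(p0, nu.*2))
  (D0 : 'M[R]_(p0, mu2.*2)) (b : 'M[R]_(nu.*2, mu2.*2 + p))
  (Rm : 'M[R]_(nu.*2)) :
  symmetricb Rm ->
  hurwitz (Acl A B2 C D b Rm) ->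
  let E := (fun X : 'M[R]_(nu.*2) => Ecost A B1 B2 C D C0 D0 b X : R^o) in
  (\forall X \near Rm, differentiable E X) /\
  (forall H : 'M[R]_(nu.*2), differentiable (fun X => 'd E X H) Rm) /\
  (forall H K : 'M[R]_(nu.*2), symmetricb H -> symmetricb K ->
     'd (fun X => 'd E X H) Rm K
       = frob (Hess A B1 B2 C D C0 D0 b Rm H) K).
Proof.
(* Neither [Rm] nor [H] needs to be symmetric for the formula to hold. *)
move=> _ hurwA E.
have unitA := hurwitz_lyap_mx_unit hurwA.
have unitAT := hurwitz_lyap_mx_unit (hurwitz_tr hurwA).
split.
  near=> X; have unitX : lyap_mx (Acl A B2 C D b X) \in unitmx.
    by near: X; exact: unit_lyap_Acl_near.
  exact: (ex_diff (is_diff_def := is_diff_Ecost B1 C0 D0 unitX)).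
split => [H|H K _ symK].
  exact: (ex_diff (is_diff_def := is_diff_dEcost B1 C0 D0 H unitA)).
rewrite (diff_val (is_diff_def := is_diff_dEcost B1 C0 D0 H unitA)).
rewrite hessian_trace //; last by rewrite trmx_mul trmxK.
by rewrite /Hess /frob linearZ /= -scalemxAl mxtraceZ -/(frob _ K) frob_Jadj.
Unshelve. all: by end_near.
Qed.
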